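(* Let $d,H\ge1$, $T_{\max}\ge2$. Consider the model and loss defined in the context, with the unitary context distribution. Let $\theta^*=(\mathtt{A}^*,\mathtt{B}^*,P^* )$ satisfy $\ell(\theta^* )=0$ and set $\mathtt{C}^*=\mathtt{B}^{*\top}\mathtt{A}^*$. Then for every $T\in\{2,\dots,T_{\max}\}$: $P^*_{T-1,t}=0$ for all $t\in\{1,\dots,T-1\}$; $P^*_{T-1,T}\,\mathtt{C}^*_{ii}=1$ for all $i$; and $\mathtt{C}^*_{ij}=0$ for all $i\ne j$. Consequently $H\ge d$, and for every $\lambda$ with unit-modulus coordinates and $e_t=\lambda^{t-1}$, $\mathcal{T}_{\theta^*}(e_{1:T})=(\bar e_{T-1}\odot e_T)\odot e_T$ $(=\lambda^T)$.
   Context: Setting: $\lambda\in\mathbb{C}^d$ has i.i.d. coordinates uniform on the unit circle (unitary context distribution); $s_t=e_t=\lambda^{t-1}$ (coordinatewise powers; $s_1=1_d$, $s_{t+1}=\mathrm{diag}(\lambda)s_t$). Parameters $\theta=(\mathtt{A},\mathtt{B},P)$ with $\mathtt{A},\mathtt{B}\in\mathbb{R}^{H\times d}$ whose rows are $a_h,b_h\in\mathbb{R}^d$, and $P\in\mathbb{R}^{T_{\max}\times T_{\max}}$. Model: $\mathcal{T}_\theta(e_{1:T})=\sum_{h=1}^H\sum_{t=1}^T P_{T-1,t}\langle e_t,\mathrm{diag}(a_h)e_{T-1}\rangle_{\mathbb{C}}\mathrm{diag}(b_h)e_t$, where $\langle x,y\rangle_{\mathbb{C}}=\sum_i x_i\bar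 y_i$. Loss: $\ell(\theta)=\sum_{T=2}^{T_{\max}}\mathbb{E}_\lambda\|\mathcal{T}_\theta(e_{1:T})-s_{T+1}\|^2$ (Hermitian norm). $\odot$ is the coordinatewise product, bar is complex conjugation. *)

From Stdlib Require Import Reals.
From Coquelicot Require Import Coquelicot.
Open Scope R_scope.

Notation Cx := Complex.C.

Fixpoint Rsum (n : nat) (f : nat -> R) : R :=
  match n with O => 0 | S m => Rsum m f + f m end.
Fixpoint Csum (n : nat) (f : nat -> Cx) : Cx :=
  match n with O => RtoC 0 | S m => Cplus (Csum m f) (f m) end.

Fixpoint cpown (z : Cx) (n : nat) : Cx :=
  match n with O => RtoC 1 | S m => Cmult z (cpown z m) end.

(* Vectors of C^d are functions nat -> Cx, only coordinates 0..d-1 matter. *)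
Definition cinner (d : nat) (x y : nat -> Cx) : Cx :=
  Csum d (fun i => Cmult (x i) (Cconj (y i))).
Definition cnorm2 (d : nat) (x : nat -> Cx) : R :=
  Rsum d (fun i => Cmod (x i) ^ 2).
Definition cdiag (a : nat -> R) (x : nat -> Cx) : nat -> Cx :=
  fun i => Cmult (RtoC (a i)) (x i).

(* e_t = lambda^(t-1) coordinatewise (t is 1-indexed). *)
Definition e_seq (lam : nat -> Cx) (t : nat) : nat -> Cx :=
  fun i => cpown (lam i) (t - 1).

(* Parameters: A, B : H x d real matrices given as (h,i) |-> entry, h < H, i < d
   (0-indexed); P : Tmax x Tmax real matrix given with 1-indexed entries P k t.
   Model:
   T_theta(e_{1:T}) = sum_{h<H} sum_{t=1}^T P_{T-1,t} <e_t, diag(a_h) e_{T-1}>_C diag(b_h) e_t *)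
Definition model (d H : nat) (A B P : nat -> nat -> R) (e : nat -> nat -> Cx)
  (T : nat) : nat -> Cx :=
  fun j => Csum H (fun h => Csum T (fun t0 =>
    let t := S t0 in
    Cmult (Cmult (RtoC (P (T - 1)%nat t))
                 (cinner d (e t) (cdiag (A h) (e (T - 1)%nat))))
          (cdiag (B h) (e t) j))).

(* Expectation over lambda with i.i.d. coordinates uniform on the unit circle:
   lambda_i = exp(i theta_i) with theta_i i.i.d. uniform on [0, 2 pi];
   the d-fold integral is written as an iterated Riemann integral. *)
Definition upd (th : nat -> R) (m : nat) (x : R) : nat -> R :=
  fun i => if Nat.eqb i m then x else th i.
Fixpoint iter_int (n : nat) (f : (nat -> R) -> R) : R :=
  match n with
  | O => f (fun _ => 0)
  | S m => RInt (fun x => iter_int m (fun th => f (upd th m x))) 0 (2 * PI)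
  end.
Definition unit_pt (th : nat -> R) : nat -> Cx :=
  fun i => (cos (th i), sin (th i)).
Definition E_unit (d : nat) (F : (nat -> Cx) -> R) : R :=
  iter_int d (fun th => F (unit_pt th)) / (2 * PI) ^ d.

(* Loss: sum_{T=2}^{Tmax} E_lambda || T_theta(e_{1:T}) - s_{T+1} ||^2,
   with s_{T+1} = lambda^T. *)
Definition loss (d H Tmax : nat) (A B P : nat -> nat -> R) : R :=
  Rsum (Tmax - 1) (fun k =>
    let T := (k + 2)%nat in
    E_unit d (fun lam =>
      cnorm2 d (fun j => Cminus (model d H A B P (e_seq lam) T j)
                               (cpown (lam j) T)))).

Definition Cmat (H : nat) (A B : nat -> nat -> R) (i j : nat) : R :=
  Rsum H (fun h => B h i * A h j).

From Stdlib Require Import Reals Lra Lia FunctionalExtensionality.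
From Coquelicot Require Import Coquelicot.
From mathcomp Require all_boot all_algebra Rstruct.
Open Scope R_scope.

(* A vanishing loss makes every (nonnegative, continuous) integrand vanish on the whole
   torus, so the model reproduces [lam^T] at every unit vector [lam].  Expanding,
     T_theta(e_{1:T})_j = sum_{t<T} sum_i P_{T-1,t+1} C_{ji} lam_i^t conj(lam_i)^(T-2) lam_j^t.
   Substituting [lam_i = z^(n_i)] for well chosen exponents [n] gives identities between
   trigonometric polynomials in one unit variable [z], whose Laurent coefficients are read
   off by averaging over roots of unity: the coefficient of [z^T] yields
   [P_{T-1,T} C_jj = 1], an extra [z^2] isolates [C_{j i0} = 0], and the lower degrees yield
   [P_{T-1,t} = 0].  Then [C = B^T A] is an invertible [d x d] matrix factoring through
   [R^H], hence [d <= H]. *)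

(** * Finite sums *)

Lemma Rsum_ext n (f g : nat -> R) :
  (forall k, (k < n)%nat -> f k = g k) -> Rsum n f = Rsum n g.
Proof.
  induction n as [|n IH]; intros Hfg; [reflexivity|]; simpl.
  rewrite IH by (intros; apply Hfg; lia). rewrite Hfg by lia. reflexivity.
Qed.

Lemma Rsum_nonneg n (f : nat -> R) :
  (forall k, (k < n)%nat -> 0 <= f k) -> 0 <= Rsum n f.
Proof.
  induction n as [|n IH]; intros Hf; simpl; [lra|].
  assert (0 <= f n) by (apply Hf; lia).
  assert (0 <= Rsum n f) by (apply IH; intros; apply Hf; lia). lra.
Qed.

Lemma Rsum_eq0_nonneg n (f : nat -> R) :
  (forall k, (k < n)%nat -> 0 <= f k) -> Rsum n f = 0 ->
  forall k, (k < n)%nat -> f k = 0.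
Proof.
  induction n as [|n IH]; intros Hf Hsum k Hk; simpl in Hsum; [lia|].
  assert (0 <= f n) by (apply Hf; lia).
  assert (0 <= Rsum n f) by (apply Rsum_nonneg; intros; apply Hf; lia).
  destruct (Nat.eq_dec k n) as [->|Hkn]; [lra|].
  apply IH; [intros; apply Hf; lia | lra | lia].
Qed.

Lemma RtoC_Rsum n (f : nat -> R) : RtoC (Rsum n f) = Csum n (fun k => RtoC (f k)).
Proof. induction n as [|n IH]; simpl; [reflexivity|]. rewrite <- IH, RtoC_plus. reflexivity. Qed.

Lemma Csum_ext n (f g : nat -> Cx) :
  (forall k, (k < n)%nat -> f k = g k) -> Csum n f = Csum n g.
Proof.
  induction n as [|n IH]; intros Hfg; [reflexivity|]; simpl.
  rewrite IH by (intros; apply Hfg; lia). rewrite Hfg by lia. reflexivity.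
Qed.

Lemma Csum_add n (f g : nat -> Cx) :
  Csum n (fun k => f k + g k)%C = (Csum n f + Csum n g)%C.
Proof. induction n as [|n IH]; simpl; [ring|]. rewrite IH. ring. Qed.

Lemma Csum_mult_l n c (f : nat -> Cx) : (c * Csum n f)%C = Csum n (fun k => c * f k)%C.
Proof. induction n as [|n IH]; simpl; [ring|]. rewrite <- IH. ring. Qed.

Lemma Csum_mult_r n c (f : nat -> Cx) : (Csum n f * c)%C = Csum n (fun k => f k * c)%C.
Proof. induction n as [|n IH]; simpl; [ring|]. rewrite <- IH. ring. Qed.

Lemma Csum_const n (c : Cx) : Csum n (fun _ => c) = (INR n * c)%C.
Proof. induction n as [|n IH]; simpl Csum; [simpl; ring|]. rewrite IH, S_INR, RtoC_plus. ring. Qed.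

Lemma Csum_eq0 n (f : nat -> Cx) : (forall k, (k < n)%nat -> f k = 0%C) -> Csum n f = 0%C.
Proof. intros Hf. rewrite (Csum_ext n f (fun _ => 0%C)) by auto. rewrite Csum_const. ring. Qed.

Lemma Csum_swap n m (f : nat -> nat -> Cx) :
  Csum n (fun i => Csum m (f i)) = Csum m (fun k => Csum n (fun i => f i k)).
Proof.
  induction n as [|n IH]; simpl.
  - symmetry. apply Csum_eq0. reflexivity.
  - rewrite IH, <- Csum_add. reflexivity.
Qed.

Lemma Csum_single n (f : nat -> Cx) k0 : (k0 < n)%nat ->
  (forall k, (k < n)%nat -> k <> k0 -> f k = 0%C) -> Csum n f = f k0.
Proof.
  induction n as [|n IH]; intros Hk0 Hf; simpl; [lia|].
  destruct (Nat.eq_dec k0 n) as [->|Hne].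
  - rewrite Csum_eq0 by (intros; apply Hf; lia). ring.
  - rewrite IH, (Hf n) by (lia || (intros; apply Hf; lia)). ring.
Qed.

Lemma Csum2_select_single T d (guard : nat -> nat -> bool) (v : nat -> nat -> Cx) t1 i1 :
  (t1 < T)%nat -> (i1 < d)%nat -> guard t1 i1 = true ->
  (forall t i, (t < T)%nat -> (i < d)%nat -> guard t i = true ->
     (t = t1 /\ i = i1) \/ v t i = 0%C) ->
  Csum T (fun t => Csum d (fun i => if guard t i then v t i else 0%C)) = v t1 i1.
Proof.
  intros Ht1 Hi1 Hsel Honly.
  assert (Hoff : forall t i, (t < T)%nat -> (i < d)%nat -> (t <> t1 \/ i <> i1) ->
            (if guard t i then v t i else 0%C) = 0%C).
  { intros t i Ht Hi Hne. destruct (guard t i) eqn:Hg; [|reflexivity].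
    destruct (Honly t i Ht Hi Hg) as [[-> ->]|Hv]; [tauto|exact Hv]. }
  rewrite (Csum_single T _ t1 Ht1).
  - rewrite (Csum_single d _ i1 Hi1), Hsel; [reflexivity|].
    intros i Hi Hne. apply Hoff; auto.
  - intros t Ht Hne. apply Csum_eq0. intros i Hi. apply Hoff; auto.
Qed.

(** * The unit circle *)

Definition cis (x : R) : Cx := (cos x, sin x).

Lemma cis_0 : cis 0 = 1%C.
Proof. unfold cis. rewrite cos_0, sin_0. reflexivity. Qed.

Lemma cis_add a b : cis (a + b) = (cis a * cis b)%C.
Proof.
  unfold cis, Cmult; simpl. rewrite cos_plus, sin_plus.
  apply injective_projections; simpl; ring.
Qed.

Lemma Cpow_cis x n : (cis x ^ n)%C = cis (INR n * x).
Proof.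
  induction n as [|n IH]; simpl Cpow.
  - simpl INR. rewrite Rmult_0_l, cis_0. reflexivity.
  - rewrite IH, <- cis_add, S_INR. f_equal. ring.
Qed.

Lemma Cconj_cis x : Cconj (cis x) = cis (- x).
Proof. unfold cis, Cconj; simpl. rewrite cos_neg, sin_neg. reflexivity. Qed.

Lemma Cmod_cis x : Cmod (cis x) = 1.
Proof.
  unfold cis, Cmod; cbn [fst snd]. rewrite <- sqrt_1. f_equal.
  rewrite <- (sin2_cos2 x). unfold Rsqr. ring.
Qed.

Lemma cis_2PI_mult n : cis (2 * PI * INR n) = 1%C.
Proof.
  unfold cis. replace (2 * PI * INR n) with (0 + 2 * INR n * PI) by ring.
  rewrite cos_period, sin_period, cos_0, sin_0. reflexivity.
Qed.

Lemma cis_neq_1 x : 0 < Rabs x < 2 * PI -> cis x <> 1%C.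
Proof.
  intros Hx Hcis. injection Hcis as Hcos _.
  assert (Hsin : sin (Rabs x / 2) <> 0) by (apply Rgt_not_eq, sin_gt_0; lra).
  apply Hsin, Rsqr_0_uniq.
  assert (Hcos' : cos (2 * (Rabs x / 2)) = 1).
  { replace (2 * (Rabs x / 2)) with (Rabs x) by field.
    destruct (Rcase_abs x); [rewrite Rabs_left, cos_neg | rewrite Rabs_right]; lra. }
  rewrite cos_2a_sin in Hcos'. unfold Rsqr. lra.
Qed.

(* The [sqrt 2] comes from comparing the euclidean norm with the max norm. *)
Lemma cis_lipschitz a b : Cmod (cis a - cis b) <= sqrt 2 * Rabs (a - b).
Proof.
  assert (Hlip : forall h dh, (forall t, is_derive h t (dh t)) -> (forall t, Rabs (dh t) <= 1) ->
            Rabs (h a - h b) <= Rabs (a - b)).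
  { intros h dh Hd Hb. rewrite <- (Rmult_1_l (Rabs (a - b))).
    apply (bounded_variation h dh). auto. }
  eapply Rle_trans; [apply Cmod_2Rmax|].
  apply Rmult_le_compat_l; [apply sqrt_pos|]. apply Rmax_lub; simpl.
  - apply (Hlip cos (fun t => - sin t)); [apply is_derive_cos|].
    intros t. rewrite Rabs_Ropp. apply Rabs_le, SIN_bound.
  - apply (Hlip sin cos); [apply is_derive_sin|].
    intros t. apply Rabs_le, COS_bound.
Qed.
(** * Iterated integrals of Lipschitz functions of the angles *)

Definition dist_le (r : R) (th th' : nat -> R) : Prop :=
  forall i, Rabs (th i - th' i) <= r.

Definition lipschitz (L : R) (f : (nat -> R) -> R) : Prop :=
  forall th th' r, dist_le r th th' -> Rabs (f th - f th') <= L * r.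

Lemma dist_le_upd th m x y : dist_le (Rabs (x - y)) (upd th m x) (upd th m y).
Proof.
  intros i. unfold upd. destruct (Nat.eqb i m); [lra|].
  rewrite Rminus_diag, Rabs_R0. apply Rabs_pos.
Qed.

Lemma lipschitz_upd L f m x : lipschitz L f -> lipschitz L (fun th => f (upd th m x)).
Proof.
  intros Hf th th' r Hr. apply Hf. intros i. unfold upd.
  destruct (Nat.eqb i m); [|apply Hr].
  rewrite Rminus_diag, Rabs_R0. specialize (Hr i). pose proof (Rabs_pos (th i - th' i)). lra.
Qed.

Lemma continuous_of_lipschitz (g : R -> R) L :
  (forall x y, Rabs (g x - g y) <= L * Rabs (x - y)) -> forall x, continuous g x.
Proof.
  intros Hg x. apply continuity_pt_filterlim. intros eps Heps.
  exists (eps / (Rabs L + 1)). split; [apply Rdiv_lt_0_compat; pose proof (Rabs_pos L); lra|].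
  intros y [_ Hy]. change (Rabs (y - x) < eps / (Rabs L + 1)) in Hy.
  change (Rabs (g y - g x) < eps).
  eapply Rle_lt_trans; [apply Hg|].
  pose proof (Rle_abs L). pose proof (Rabs_pos L). pose proof (Rabs_pos (y - x)).
  apply Rle_lt_trans with ((Rabs L + 1) * Rabs (y - x)); [nra|].
  replace eps with ((Rabs L + 1) * (eps / (Rabs L + 1))) by (field; lra).
  apply Rmult_lt_compat_l; lra.
Qed.

Lemma section_continuous (I : ((nat -> R) -> R) -> R) c :
  (forall L L' f g r, lipschitz L f -> lipschitz L' g ->
     (forall th, Rabs (f th - g th) <= r) -> Rabs (I f - I g) <= c * r) ->
  forall L f m x, lipschitz L f -> continuous (fun y => I (fun th => f (upd th m y))) x.
Proof.
  intros HI L f m x Hf. apply (continuous_of_lipschitz _ (c * L)). intros y z.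
  rewrite Rmult_assoc. apply (HI L L); [apply lipschitz_upd; exact Hf ..|].
  intros th. apply Hf, dist_le_upd.
Qed.

Lemma iter_int_dist m : forall L L' f g r, lipschitz L f -> lipschitz L' g ->
  (forall th, Rabs (f th - g th) <= r) ->
  Rabs (iter_int m f - iter_int m g) <= (2 * PI) ^ m * r.
Proof.
  pose proof PI_RGT_0.
  induction m as [|m IH]; intros L L' f g r Hf Hg Hfg; simpl iter_int.
  - rewrite pow_O, Rmult_1_l. apply Hfg.
  - assert (Hint : forall L0 h, lipschitz L0 h ->
              ex_RInt (fun x => iter_int m (fun th => h (upd th m x))) 0 (2 * PI)).
    { intros L0 h Hh. apply (@ex_RInt_continuous R_CompleteNormedModule).
      intros x _. apply (section_continuous _ _ IH L0); exact Hh. }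
    rewrite <- (RInt_minus (V := R_CompleteNormedModule)) by eauto.
    eapply Rle_trans; [apply abs_RInt_le_const with (M := (2 * PI) ^ m * r)|].
    + lra.
    + apply (ex_RInt_minus (V := R_NormedModule)); eauto.
    + intros x _. apply (IH L L'); try apply lipschitz_upd; auto.
    + simpl pow. lra.
Qed.

Lemma iter_int_section_continuous m L f k x : lipschitz L f ->
  continuous (fun y => iter_int m (fun th => f (upd th k y))) x.
Proof. apply section_continuous with ((2 * PI) ^ m). apply iter_int_dist. Qed.

Lemma iter_int_nonneg m : forall L f, lipschitz L f -> (forall th, 0 <= f th) ->
  0 <= iter_int m f.
Proof.
  pose proof PI_RGT_0.
  induction m as [|m IH]; intros L f Hf Hpos; simpl iter_int; [apply Hpos|].
  apply RInt_ge_0; [lra| |intros; apply (IH L); [apply lipschitz_upd|]; auto].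
  apply (@ex_RInt_continuous R_CompleteNormedModule). intros x _.
  apply (iter_int_section_continuous m L); exact Hf.
Qed.

Lemma RInt_eq0_nonneg (g : R -> R) a b : a < b -> (forall x, continuous g x) ->
  (forall x, a <= x <= b -> 0 <= g x) -> RInt g a b = 0 ->
  forall x, a <= x <= b -> g x = 0.
Proof.
  intros Hab Hg Hpos Hint x0 Hx0.
  destruct (Req_dec (g x0) 0) as [|Hne]; [assumption|exfalso].
  assert (Hgx0 : 0 < g x0) by (specialize (Hpos x0 Hx0); lra).
  destruct (proj2 (continuity_pt_filterlim g x0) (Hg x0) (g x0 / 2) ltac:(lra))
    as [del [Hdel Hnear]].
  assert (Hpos_near : forall y, Rabs (y - x0) < del -> 0 < g y).
  { intros y Hy. destruct (Req_dec y x0) as [->|Hyx]; [exact Hgx0|].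
    specialize (Hnear y (conj (conj I (not_eq_sym Hyx)) Hy)).
    unfold R_dist in Hnear. apply Rabs_def2 in Hnear. lra. }
  set (c := Rmax a (x0 - del / 2)). set (e := Rmin b (x0 + del / 2)).
  assert (Hce : a <= c < e /\ e <= b).
  { unfold c, e, Rmax, Rmin. destruct (Rle_dec a (x0 - del / 2)), (Rle_dec b (x0 + del / 2)); lra. }
  assert (Hc_ge : x0 - del / 2 <= c) by apply Rmax_r.
  assert (He_le : e <= x0 + del / 2) by apply Rmin_r.
  assert (Hex : forall u v, ex_RInt g u v).
  { intros. apply (@ex_RInt_continuous R_CompleteNormedModule). auto. }
  assert (Hmid : 0 < RInt g c e).
  { apply RInt_gt_0; [lra| |auto]. intros y Hy. apply Hpos_near.
    apply Rabs_def1; lra. }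
  assert (Hleft : 0 <= RInt g a c) by (apply RInt_ge_0; auto; lra || (intros; apply Hpos; lra)).
  assert (Hright : 0 <= RInt g e b) by (apply RInt_ge_0; auto; lra || (intros; apply Hpos; lra)).
  rewrite <- (RInt_Chasles g a e b), <- (RInt_Chasles g a c e) in Hint by auto.
  change (RInt g a c + RInt g c e + RInt g e b = 0) in Hint. lra.
Qed.

(* Angles beyond the [m] integrated coordinates are frozen at [0] by [iter_int]. *)
Lemma iter_int_eq0 m : forall L f, lipschitz L f -> (forall th, 0 <= f th) ->
  iter_int m f = 0 -> forall s, (forall i, (i < m)%nat -> 0 <= s i <= 2 * PI) ->
  (forall i, (m <= i)%nat -> s i = 0) -> f s = 0.
Proof.
  pose proof PI_RGT_0.
  induction m as [|m IH]; intros L f Hf Hpos Hint s Hin Hout; simpl iter_int in Hint.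
  - rewrite <- Hint. f_equal. extensionality i. apply Hout. lia.
  - assert (Hsec : iter_int m (fun th => f (upd th m (s m))) = 0).
    { apply (RInt_eq0_nonneg (fun x => iter_int m (fun th => f (upd th m x))) 0 (2 * PI));
        auto; [lra| |].
      - intros x. apply (iter_int_section_continuous m L); exact Hf.
      - intros x _. apply (iter_int_nonneg m L); [apply lipschitz_upd|]; auto. }
    replace s with (upd (upd s m 0) m (s m)).
    + apply (IH L (fun th => f (upd th m (s m)))); auto; [apply lipschitz_upd; exact Hf| |].
      * intros i Hi. unfold upd. destruct (Nat.eqb_spec i m); [lia|]. apply Hin. lia.
      * intros i Hi. unfold upd. destruct (Nat.eqb_spec i m); [reflexivity|]. apply Hout. lia.
    + extensionality i. unfold upd. destruct (Nat.eqb_spec i m); congruence.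
Qed.

(** * Vanishing of the loss *)

Definition unit_angle (z : Cx) : R :=
  if Rle_dec 0 (snd z) then acos (fst z) else 2 * PI - acos (fst z).

Lemma unit_angle_spec z : Cmod z = 1 ->
  0 <= unit_angle z <= 2 * PI /\ cis (unit_angle z) = z.
Proof.
  destruct z as [x y]. unfold Cmod; cbn [fst snd]. intros Hz.
  assert (Hxy : x ^ 2 + y ^ 2 = 1).
  { rewrite <- (pow2_sqrt (x ^ 2 + y ^ 2)), Hz by nra. ring. }
  assert (Hx : -1 <= x <= 1) by nra.
  assert (Hy2 : 1 - x² = y ^ 2) by (unfold Rsqr; lra).
  pose proof (acos_bound x). pose proof PI_RGT_0.
  unfold unit_angle, cis; cbn [fst snd]. destruct (Rle_dec 0 y).
  - split; [lra|]. rewrite cos_acos, sin_acos, Hy2, sqrt_pow2 by lra. reflexivity.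
  - split; [lra|].
    rewrite cos_minus, sin_minus, cos_2PI, sin_2PI, cos_acos, sin_acos, Hy2 by lra.
    replace (y ^ 2) with ((- y) ^ 2) by ring. rewrite sqrt_pow2 by lra.
    f_equal; ring.
Qed.

Definition bounded_lipschitz (F : (nat -> R) -> Cx) : Prop :=
  exists M L, (forall th, Cmod (F th) <= M) /\
    forall th th' r, dist_le r th th' -> Cmod (F th - F th') <= L * r.

Lemma bounded_lipschitz_const c : bounded_lipschitz (fun _ => c).
Proof.
  exists (Cmod c), 0. split; [intros; lra|].
  intros th th' r _. replace (c - c)%C with (RtoC 0) by ring. rewrite Cmod_0. lra.
Qed.

Lemma bounded_lipschitz_cis i : bounded_lipschitz (fun th => cis (th i)).
Proof.
  exists 1, (sqrt 2). split; [intros; rewrite Cmod_cis; lra|].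
  intros th th' r Hr. eapply Rle_trans; [apply cis_lipschitz|].
  apply Rmult_le_compat_l; [apply sqrt_pos|apply Hr].
Qed.

Lemma bounded_lipschitz_add F G : bounded_lipschitz F -> bounded_lipschitz G ->
  bounded_lipschitz (fun th => F th + G th)%C.
Proof.
  intros (M1 & L1 & HM1 & HL1) (M2 & L2 & HM2 & HL2).
  exists (M1 + M2), (L1 + L2). split.
  - intros th. eapply Rle_trans; [apply Cmod_triangle|].
    specialize (HM1 th). specialize (HM2 th). lra.
  - intros th th' r Hr.
    replace (F th + G th - (F th' + G th'))%C with ((F th - F th') + (G th - G th'))%C by ring.
    eapply Rle_trans; [apply Cmod_triangle|].
    specialize (HL1 th th' r Hr). specialize (HL2 th th' r Hr). lra.
Qed.

Lemma bounded_lipschitz_opp F : bounded_lipschitz F -> bounded_lipschitz (fun th => - F th)%C.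
Proof.
  intros (M & L & HM & HL). exists M, L. split.
  - intros th. rewrite Cmod_opp. apply HM.
  - intros th th' r Hr. replace (- F th - - F th')%C with (- (F th - F th'))%C by ring.
    rewrite Cmod_opp. auto.
Qed.

Lemma bounded_lipschitz_conj F : bounded_lipschitz F ->
  bounded_lipschitz (fun th => Cconj (F th)).
Proof.
  intros (M & L & HM & HL). exists M, L. split.
  - intros th. rewrite Cmod_conj. apply HM.
  - intros th th' r Hr. rewrite <- Cminus_conj, Cmod_conj. auto.
Qed.

Lemma bounded_lipschitz_mult F G : bounded_lipschitz F -> bounded_lipschitz G ->
  bounded_lipschitz (fun th => F th * G th)%C.
Proof.
  intros (M1 & L1 & HM1 & HL1) (M2 & L2 & HM2 & HL2).
  exists (M1 * M2), (L1 * M2 + M1 * L2). split.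
  - intros th. rewrite Cmod_mult. apply Rmult_le_compat; auto using Cmod_ge_0.
  - intros th th' r Hr.
    replace (F th * G th - F th' * G th')%C
      with ((F th - F th') * G th + F th' * (G th - G th'))%C by ring.
    eapply Rle_trans; [apply Cmod_triangle|]. rewrite !Cmod_mult.
    assert (Cmod (F th - F th') * Cmod (G th) <= L1 * r * M2)
      by (apply Rmult_le_compat; auto using Cmod_ge_0).
    assert (Cmod (F th') * Cmod (G th - G th') <= M1 * (L2 * r))
      by (apply Rmult_le_compat; auto using Cmod_ge_0).
    nra.
Qed.

Lemma bounded_lipschitz_Csum n (F : nat -> (nat -> R) -> Cx) :
  (forall k, bounded_lipschitz (F k)) -> bounded_lipschitz (fun th => Csum n (fun k => F k th)).
Proof.
  intros HF. induction n as [|n IH]; simpl.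
  - apply bounded_lipschitz_const.
  - apply bounded_lipschitz_add; auto.
Qed.

Lemma bounded_lipschitz_pow F n : bounded_lipschitz F ->
  bounded_lipschitz (fun th => (F th ^ n)%C).
Proof.
  intros HF. induction n as [|n IH]; simpl.
  - apply bounded_lipschitz_const.
  - apply bounded_lipschitz_mult; auto.
Qed.

Lemma lipschitz_Cmod_sqr F : bounded_lipschitz F ->
  exists L, lipschitz L (fun th => Cmod (F th) ^ 2).
Proof.
  intros (M & L & HM & HL). exists (2 * M * L). intros th th' r Hr.
  assert (Hdiff : Rabs (Cmod (F th) - Cmod (F th')) <= L * r).
  { eapply Rle_trans; [|apply (HL th th' r Hr)].
    apply Rabs_le. split.
    - pose proof (Cmod_triangle (F th' - F th) (F th)) as Htri.
      replace (F th' - F th + F th)%C with (F th') in Htri by ring.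
      replace (F th' - F th)%C with (- (F th - F th'))%C in Htri by ring.
      rewrite Cmod_opp in Htri. lra.
    - pose proof (Cmod_triangle (F th - F th') (F th')) as Htri.
      replace (F th - F th' + F th')%C with (F th) in Htri by ring. lra. }
  replace (Cmod (F th) ^ 2 - Cmod (F th') ^ 2)
    with ((Cmod (F th) - Cmod (F th')) * (Cmod (F th) + Cmod (F th'))) by ring.
  pose proof (HM th). pose proof (HM th'). pose proof (Cmod_ge_0 (F th)).
  pose proof (Cmod_ge_0 (F th')). pose proof (Rabs_pos (Cmod (F th) - Cmod (F th'))).
  rewrite Rabs_mult, (Rabs_right (_ + _)) by lra.
  apply Rle_trans with (L * r * (2 * M)); [apply Rmult_le_compat; lra | lra].
Qed.

Lemma lipschitz_Rsum n (f : nat -> (nat -> R) -> R) :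
  (forall k, exists L, lipschitz L (f k)) ->
  exists L, lipschitz L (fun th => Rsum n (fun k => f k th)).
Proof.
  intros Hf. induction n as [|n [L IH]]; simpl.
  - exists 0. intros th th' r _. rewrite Rminus_diag, Rabs_R0. lra.
  - destruct (Hf n) as [Ln Hn]. exists (L + Ln). intros th th' r Hr.
    replace (Rsum n (fun k => f k th) + f n th - (Rsum n (fun k => f k th') + f n th'))
      with ((Rsum n (fun k => f k th) - Rsum n (fun k => f k th')) + (f n th - f n th')) by ring.
    eapply Rle_trans; [apply Rabs_triang|].
    specialize (IH th th' r Hr). specialize (Hn th th' r Hr). lra.
Qed.

Definition sq_residual (d H : nat) (A B P : nat -> nat -> R) (T : nat) (lam : nat -> Cx) : R :=
  cnorm2 d (fun j => Cminus (model d H A B P (e_seq lam) T j) (cpown (lam j) T)).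

Lemma cnorm2_eq0 d x : cnorm2 d x = 0 -> forall j, (j < d)%nat -> x j = 0%C.
Proof.
  intros Hx j Hj. apply Cmod_eq_0.
  assert (Hsq := Rsum_eq0_nonneg d _ (fun k _ => pow2_ge_0 (Cmod (x k))) Hx j Hj).
  simpl in Hsq. nra.
Qed.

Lemma sq_residual_nonneg d H A B P T lam : 0 <= sq_residual d H A B P T lam.
Proof. apply Rsum_nonneg. intros. apply pow2_ge_0. Qed.

Lemma sq_residual_lipschitz d H A B P T :
  exists L, lipschitz L (fun th => sq_residual d H A B P T (unit_pt th)).
Proof.
  assert (Hcis : forall i, bounded_lipschitz (fun th => unit_pt th i))
    by exact bounded_lipschitz_cis.
  assert (Hconst := bounded_lipschitz_const).
  apply lipschitz_Rsum. intros j. apply lipschitz_Cmod_sqr.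
  (* [cpown] is literally the same fixpoint as Coquelicot's [Cpow]. *)
  unfold model, cinner, cdiag, e_seq. change cpown with Cpow.
  apply bounded_lipschitz_add; [|apply bounded_lipschitz_opp, bounded_lipschitz_pow, Hcis].
  apply bounded_lipschitz_Csum. intros h. apply bounded_lipschitz_Csum. intros t.
  repeat first [ apply bounded_lipschitz_mult | apply bounded_lipschitz_conj
               | apply bounded_lipschitz_Csum; intros | apply bounded_lipschitz_pow
               | apply Hconst | apply Hcis ].
Qed.

Lemma model_local d H A B P T (lam lam' : nat -> Cx) j :
  (forall i, (i < d)%nat -> lam i = lam' i) -> (j < d)%nat ->
  model d H A B P (e_seq lam) T j = model d H A B P (e_seq lam') T j.
Proof.
  intros Hl Hj. unfold model, cinner, cdiag, e_seq.
  apply Csum_ext; intros h _. apply Csum_ext; intros t _.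
  rewrite (Hl j Hj). do 2 f_equal. apply Csum_ext. intros i Hi. rewrite (Hl i Hi). reflexivity.
Qed.

Lemma sq_residual_local d H A B P T (lam lam' : nat -> Cx) :
  (forall i, (i < d)%nat -> lam i = lam' i) ->
  sq_residual d H A B P T lam = sq_residual d H A B P T lam'.
Proof.
  intros Hl. apply Rsum_ext. intros j Hj.
  rewrite (model_local d H A B P T lam lam' j Hl Hj), (Hl j Hj). reflexivity.
Qed.

Lemma model_eq_of_loss_eq0 d H Tmax A B P : loss d H Tmax A B P = 0 ->
  forall T, (2 <= T <= Tmax)%nat ->
  forall lam : nat -> Cx, (forall i, (i < d)%nat -> Cmod (lam i) = 1) ->
  forall j, (j < d)%nat -> model d H A B P (e_seq lam) T j = cpown (lam j) T.
Proof.
  intros Hloss T HT lam Hlam j Hj.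
  pose proof PI_RGT_0.
  assert (Hvol : 0 < / (2 * PI) ^ d) by (apply Rinv_0_lt_compat, pow_lt; lra).
  assert (Hexp : forall T', 0 <= E_unit d (sq_residual d H A B P T')).
  { intros T'. destruct (sq_residual_lipschitz d H A B P T') as [L HL].
    apply Rmult_le_pos; [|lra].
    apply (iter_int_nonneg d L); [exact HL|intros; apply sq_residual_nonneg]. }
  assert (HexpT : E_unit d (sq_residual d H A B P T) = 0).
  { replace T with (T - 2 + 2)%nat by lia.
    apply (Rsum_eq0_nonneg (Tmax - 1) (fun k => E_unit d (sq_residual d H A B P (k + 2))));
      [intros; apply Hexp | exact Hloss | lia]. }
  assert (Hint : iter_int d (fun th => sq_residual d H A B P T (unit_pt th)) = 0).
  { unfold E_unit, Rdiv in HexpT. apply Rmult_integral in HexpT. destruct HexpT; [assumption|lra]. }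
  set (s := fun i => if Nat.ltb i d then unit_angle (lam i) else 0).
  assert (Hs : forall i, (i < d)%nat -> 0 <= s i <= 2 * PI /\ unit_pt s i = lam i).
  { intros i Hi. change (unit_pt s i) with (cis (s i)). unfold s.
    rewrite (proj2 (Nat.ltb_lt i d) Hi). apply unit_angle_spec, Hlam, Hi. }
  destruct (sq_residual_lipschitz d H A B P T) as [L HL].
  assert (Hzero : sq_residual d H A B P T lam = 0).
  { rewrite <- (sq_residual_local d H A B P T (unit_pt s)) by (intros i Hi; apply Hs, Hi).
    apply (iter_int_eq0 d L (fun th => sq_residual d H A B P T (unit_pt th)) HL);
      [intros; apply sq_residual_nonneg | exact Hint | intros i Hi; apply Hs, Hi |].
    intros i Hi. unfold s. rewrite (proj2 (Nat.ltb_ge i d) Hi). reflexivity. }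
  apply Ceq_minus, (cnorm2_eq0 d _ Hzero j Hj).
Qed.

(** * Laurent coefficients on the unit circle *)

Lemma Cmult_reg_l (c x y : Cx) : c <> 0%C -> (c * x)%C = (c * y)%C -> x = y.
Proof.
  intros Hc Hxy. rewrite <- (Cmult_1_l x), <- (Cmult_1_l y), <- (Cinv_l c Hc).
  rewrite <- !Cmult_assoc, Hxy. reflexivity.
Qed.

Lemma Csum_pow_root_of_unity (r : Cx) n : (r ^ n)%C = 1%C -> r <> 1%C ->
  Csum n (fun k => r ^ k)%C = 0%C.
Proof.
  intros Hrn Hr1. apply (Cmult_reg_l (r - 1)); [intros E; apply Hr1, Ceq_minus, E|].
  transitivity (r ^ n - 1)%C; [|rewrite Hrn; ring].
  clear Hrn. induction n as [|n IH]; simpl Csum; [simpl; ring|].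
  rewrite Cmult_plus_distr_l, IH, Cpow_S. simpl. ring.
Qed.

Lemma Csum_roots_of_unity N x y : (x < N)%nat -> (y < N)%nat ->
  Csum N (fun k => (cis (2 * PI / INR N) ^ k) ^ x * Cconj (cis (2 * PI / INR N) ^ k) ^ y)%C
  = if Nat.eqb x y then RtoC (INR N) else 0%C.
Proof.
  intros Hx Hy. pose proof PI_RGT_0.
  assert (HN : 0 < INR N) by (apply lt_0_INR; lia).
  set (phi := (INR x - INR y) * (2 * PI / INR N)).
  rewrite (Csum_ext N _ (fun k => cis phi ^ k)%C).
  2: { intros k _. rewrite !Cpow_cis, Cconj_cis, Cpow_cis, <- cis_add.
       f_equal. unfold phi. ring. }
  destruct (Nat.eqb_spec x y) as [<-|Hxy].
  - unfold phi. rewrite Rminus_diag, Rmult_0_l, cis_0.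
    rewrite (Csum_ext N _ (fun _ => 1%C)) by (intros; apply Cpow_1_l).
    rewrite Csum_const. ring.
  - apply Csum_pow_root_of_unity.
    + rewrite Cpow_cis.
      replace (INR N * phi) with (2 * PI * INR x + - (2 * PI * INR y)) by (unfold phi; field; lra).
      rewrite cis_add, <- Cconj_cis, !cis_2PI_mult.
      unfold Cconj; simpl. rewrite Ropp_0. apply Cmult_1_l.
    + apply cis_neq_1. unfold phi.
      assert (Hdiff : 0 < Rabs (INR x - INR y) < INR N).
      { apply lt_INR in Hx, Hy. pose proof (pos_INR x). pose proof (pos_INR y).
        destruct (Nat.lt_total x y) as [Hlt|[Heq|Hlt]]; [| lia |]; apply lt_INR in Hlt;
          [rewrite Rabs_left | rewrite Rabs_right]; lra. }
      rewrite Rabs_mult, (Rabs_right (2 * PI / INR N))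
        by (apply Rle_ge, Rlt_le, Rdiv_lt_0_compat; lra).
      split; [apply Rmult_lt_0_compat; [lra | apply Rdiv_lt_0_compat; lra]|].
      replace (2 * PI) with (INR N * (2 * PI / INR N)) at 2 by (field; lra).
      apply Rmult_lt_compat_r; [apply Rdiv_lt_0_compat|]; lra.
Qed.

(* Averaging an identity between trigonometric polynomials against
   [z^p conj(z)^q] over the [N]-th roots of unity isolates the coefficient of
   [z^(q-p)], provided all exponents involved stay below [N]. *)
Lemma laurent_coefficient T d N (c : nat -> nat -> Cx) (a b : nat -> nat -> nat) a0 p q :
  (forall t i, (t < T)%nat -> (i < d)%nat -> (a t i + p < N)%nat /\ (b t i + q < N)%nat) ->
  (a0 + p < N)%nat -> (q < N)%nat ->
  (forall z, Cmod z = 1 ->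
     Csum T (fun t => Csum d (fun i => c t i * z ^ a t i * Cconj z ^ b t i)%C) = (z ^ a0)%C) ->
  Csum T (fun t => Csum d (fun i => if Nat.eqb (a t i + p) (b t i + q) then c t i else 0%C))
  = if Nat.eqb (a0 + p) q then 1%C else 0%C.
Proof.
  intros Hab Ha0 Hq Hid.
  set (w := fun k => (cis (2 * PI / INR N) ^ k)%C).
  assert (Hw : forall k, Cmod (w k) = 1)
    by (intros k; unfold w; rewrite Cmod_pow, Cmod_cis; apply pow1).
  assert (Hmono : forall x y, (x < N)%nat -> (y < N)%nat ->
            Csum N (fun k => w k ^ x * Cconj (w k) ^ y)%C
            = (INR N * if Nat.eqb x y then 1 else 0)%C).
  { intros x y Hx Hy. unfold w. rewrite Csum_roots_of_unity by assumption.
    destruct (Nat.eqb x y); ring. }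
  apply (Cmult_reg_l (INR N)); [intros E; apply RtoC_inj in E; apply not_0_INR in E; lia|].
  rewrite <- Hmono by assumption.
  rewrite (Csum_ext N _ (fun k => Csum T (fun t => Csum d (fun i =>
             c t i * w k ^ a t i * Cconj (w k) ^ b t i)) * (w k ^ p * Cconj (w k) ^ q))%C).
  2: { intros k _. rewrite Hid by apply Hw. rewrite Cpow_add_r. ring. }
  rewrite Csum_mult_l. symmetry.
  rewrite (Csum_ext N _ (fun k => Csum T (fun t => Csum d (fun i =>
             c t i * (w k ^ (a t i + p) * Cconj (w k) ^ (b t i + q))))))%C.
  2: { intros k _. rewrite Csum_mult_r. apply Csum_ext. intros t _.
       rewrite Csum_mult_r. apply Csum_ext. intros i _. rewrite !Cpow_add_r. ring. }
  rewrite Csum_swap. apply Csum_ext. intros t Ht.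
  rewrite Csum_swap, Csum_mult_l. apply Csum_ext. intros i Hi.
  destruct (Hab t i Ht Hi). rewrite <- Csum_mult_l, Hmono by assumption.
  destruct (Nat.eqb _ _); ring.
Qed.

Lemma Cconj_RtoC (x : R) : Cconj (RtoC x) = RtoC x.
Proof. unfold Cconj; simpl. rewrite Ropp_0. reflexivity. Qed.

Lemma model_expand d H A B P T (lam : nat -> Cx) j :
  model d H A B P (e_seq lam) T j =
  Csum T (fun t => Csum d (fun i => RtoC (P (T - 1)%nat (S t) * Cmat H A B j i) *
     (lam i ^ t * Cconj (lam i ^ (T - 1 - 1)) * lam j ^ t)))%C.
Proof.
  unfold model, cinner, cdiag, e_seq. change cpown with Cpow.
  transitivity (Csum H (fun h => Csum T (fun t => Csum d (fun i =>
     RtoC (B h j * A h i) * (RtoC (P (T - 1)%nat (S t)) *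
       (lam i ^ t * Cconj (lam i ^ (T - 1 - 1)) * lam j ^ t))))))%C.
  { apply Csum_ext; intros h _. apply Csum_ext; intros t _.
    replace (S t - 1)%nat with t by lia. rewrite Csum_mult_l, Csum_mult_r.
    apply Csum_ext; intros i _. rewrite Cmult_conj, Cconj_RtoC, RtoC_mult. ring. }
  rewrite Csum_swap. apply Csum_ext; intros t _. rewrite Csum_swap. apply Csum_ext; intros i _.
  rewrite <- (Csum_mult_r H _ (fun h => RtoC (B h j * A h i))).
  unfold Cmat. rewrite RtoC_mult, RtoC_Rsum. ring.
Qed.

Section Coefficients.

Variables (d H : nat) (A B P : nat -> nat -> R) (T : nat).
Hypothesis T_ge2 : (2 <= T)%nat.
Hypothesis model_identity : forall lam : nat -> Cx, (forall i, (i < d)%nat -> Cmod (lam i) = 1) ->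
  forall j, (j < d)%nat -> model d H A B P (e_seq lam) T j = cpown (lam j) T.

(* Substituting [lam i = z ^ n i] turns the model identity into a one-variable
   trigonometric identity; its Laurent coefficient of [z ^ (q - p)] reads: *)
Lemma coefficient_identity j (n : nat -> nat) p q :
  (j < d)%nat -> n j = 1%nat -> (forall i, (n i <= 2)%nat) -> (p <= T)%nat -> (q <= 2 * T)%nat ->
  Csum T (fun t => Csum d (fun i =>
    if Nat.eqb (n i * t + t + p) (n i * (T - 1 - 1) + q)
    then RtoC (P (T - 1)%nat (S t) * Cmat H A B j i) else 0%C))
  = if Nat.eqb (T + p) q then 1%C else 0%C.
Proof.
  intros Hj Hnj Hn Hp Hq.
  apply (laurent_coefficient T d (8 * T) (fun t i => RtoC (P (T - 1)%nat (S t) * Cmat H A B j i))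
           (fun t i => n i * t + t)%nat (fun t i => n i * (T - 1 - 1))%nat T p q);
    [intros t i Ht _; specialize (Hn i); nia | lia | lia |].
  intros z Hz.
  assert (Hunit : forall i, (i < d)%nat -> Cmod (z ^ n i)%C = 1)
    by (intros i _; rewrite Cmod_pow, Hz; apply pow1).
  assert (Hid := model_identity (fun i => z ^ n i)%C Hunit j Hj).
  rewrite model_expand in Hid. change cpown with Cpow in Hid.
  rewrite Hnj, Cpow_1_r in Hid. rewrite <- Hid.
  apply Csum_ext; intros t _. apply Csum_ext; intros i _.
  rewrite <- !Cpow_mult_r, Cpow_conj, Cpow_add_r. ring.
Qed.

Lemma diagonal_coefficient j : (j < d)%nat -> P (T - 1)%nat T * Cmat H A B j j = 1.
Proof.
  intros Hj. set (n := fun i => if Nat.eqb i j then 1%nat else 0%nat).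
  assert (Hnj : n j = 1%nat) by (unfold n; rewrite Nat.eqb_refl; reflexivity).
  assert (Hn : forall i, (n i <= 2)%nat) by (intros i; unfold n; destruct (Nat.eqb i j); lia).
  assert (Hid := coefficient_identity j n 0 T Hj Hnj Hn ltac:(lia) ltac:(lia)).
  rewrite Nat.add_0_r, Nat.eqb_refl in Hid.
  rewrite (Csum2_select_single T d _ _ (T - 1) j) in Hid; [| lia | exact Hj | |].
  - replace (S (T - 1)) with T in Hid by lia. injection Hid as Hid. exact Hid.
  - rewrite Hnj. apply Nat.eqb_eq. lia.
  - intros t i Ht Hi. unfold n. destruct (Nat.eqb_spec i j); intros Hg%Nat.eqb_eq; lia.
Qed.

(* With [lam_j = z] and [lam_i0 = z^2], the term [(t, i) = (T - 1, i0)] is the only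
   monomial of degree [T + 1], which does not occur on the right-hand side. *)
Lemma offdiagonal_coefficient j i0 : (j < d)%nat -> (i0 < d)%nat -> i0 <> j ->
  Cmat H A B j i0 = 0.
Proof.
  intros Hj Hi0 Hne.
  set (n := fun i => if Nat.eqb i j then 1%nat else if Nat.eqb i i0 then 2%nat else 0%nat).
  assert (Hnj : n j = 1%nat) by (unfold n; rewrite Nat.eqb_refl; reflexivity).
  assert (Hni0 : n i0 = 2%nat)
    by (unfold n; rewrite (proj2 (Nat.eqb_neq i0 j) Hne), Nat.eqb_refl; reflexivity).
  assert (Hn : forall i, (n i <= 2)%nat)
    by (intros i; unfold n; destruct (Nat.eqb i j), (Nat.eqb i i0); lia).
  assert (Hid := coefficient_identity j n 0 (T + 1) Hj Hnj Hn ltac:(lia) ltac:(lia)).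
  rewrite (proj2 (Nat.eqb_neq (T + 0) (T + 1))) in Hid by lia.
  rewrite (Csum2_select_single T d _ _ (T - 1) i0) in Hid; [| lia | exact Hi0 | |].
  - injection Hid as Hid. pose proof (diagonal_coefficient j Hj) as Hdiag.
    destruct (Rmult_integral _ _ Hid) as [HP|HC]; [|exact HC].
    replace (S (T - 1)) with T in HP by lia. rewrite HP in Hdiag. lra.
  - rewrite Hni0. apply Nat.eqb_eq. lia.
  - intros t i Ht Hi. unfold n.
    destruct (Nat.eqb_spec i j), (Nat.eqb_spec i i0); intros Hg%Nat.eqb_eq; lia.
Qed.

(* With [lam_j = z] and the other coordinates [1], the term [(t1, j)] carries the
   monomial [z^(2 t1 + 2 - T)]; the only other terms of that degree have [i <> j],
   whose coefficients vanish by [offdiagonal_coefficient]. *)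
Lemma early_position_coefficient j t1 : (j < d)%nat -> (t1 < T - 1)%nat ->
  P (T - 1)%nat (S t1) = 0.
Proof.
  intros Hj Ht1. set (n := fun i => if Nat.eqb i j then 1%nat else 0%nat).
  assert (Hnj : n j = 1%nat) by (unfold n; rewrite Nat.eqb_refl; reflexivity).
  assert (Hn : forall i, (n i <= 2)%nat) by (intros i; unfold n; destruct (Nat.eqb i j); lia).
  assert (Hid := coefficient_identity j n T (2 * t1 + 2) Hj Hnj Hn ltac:(lia) ltac:(lia)).
  rewrite (proj2 (Nat.eqb_neq (T + T) (2 * t1 + 2))) in Hid by lia.
  rewrite (Csum2_select_single T d _ _ t1 j) in Hid; [| lia | exact Hj | |].
  - injection Hid as Hid. pose proof (diagonal_coefficient j Hj) as Hdiag.
    destruct (Rmult_integral _ _ Hid) as [HP|HC]; [exact HP|].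
    rewrite HC, Rmult_0_r in Hdiag. lra.
  - rewrite Hnj. apply Nat.eqb_eq. lia.
  - intros t i Ht Hi. unfold n. destruct (Nat.eqb_spec i j) as [Hij|Hij]; intros Hg%Nat.eqb_eq.
    + left. lia.
    + right. rewrite offdiagonal_coefficient, Rmult_0_r by assumption. reflexivity.
Qed.

End Coefficients.

(** * The rank bound *)

Module CmatRank.
Import all_boot all_algebra Rstruct GRing.Theory.
Local Open Scope ring_scope.

Lemma big_ord_Rsum (n : nat) (f : nat -> R) : \sum_(h < n) f h = Rsum n f.
Proof. elim: n => [|n IH]; [by rewrite big_ord0 | by rewrite big_ord_recr /= IH]. Qed.

(* Dividing row [i] of [B^T] by [C_ii] gives a left inverse [X] of the [H x d]
   matrix [A], so [d = rank (X A) <= H]. *)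
Lemma Cmat_diagonal_rank (d H : nat) (A B : nat -> nat -> R) :
  (forall i j, (i < d)%coq_nat -> (j < d)%coq_nat -> i <> j -> Cmat H A B i j = 0) ->
  (forall i, (i < d)%coq_nat -> Cmat H A B i i <> 0) -> (d <= H)%coq_nat.
Proof.
move=> Hoff Hdiag.
pose X : 'M[R]_(d, H) := \matrix_(i < d, h < H) (B h i / Cmat H A B i i).
pose Y : 'M[R]_(H, d) := \matrix_(h < H, j < d) A h j.
have XY : X *m Y = 1%:M.
  apply/matrixP => i j; rewrite !mxE.
  have -> : \sum_(h < H) X i h * Y h j = Cmat H A B i j / Cmat H A B i i.
    rewrite /Cmat -big_ord_Rsum mulr_suml.
    by apply: eq_bigr => h _; rewrite !mxE mulrAC.
  have Hi := Hdiag i (elimT ltP (ltn_ord i)).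
  case: (eqVneq i j) => [<-|Hij]; first by rewrite divff //; apply/eqP.
  rewrite Hoff ?mul0r //; try exact: (elimT ltP (ltn_ord _)).
  by move=> /val_inj; apply/eqP.
apply/leP; have := mulmx_max_rank X Y.
by rewrite XY mxrank1.
Qed.

End CmatRank.

Lemma conj_shift_pow (z : Cx) k : Cmod z = 1 ->
  (Cconj (z ^ k) * z ^ S k * z ^ S k)%C = (z ^ S (S k))%C.
Proof.
  intros Hz. assert (Hk : (z ^ k * Cconj (z ^ k))%C = 1%C).
  { rewrite <- Cmod2_conj, Cmod_pow, Hz, pow1. simpl. apply injective_projections; simpl; ring. }
  rewrite !Cpow_S. transitivity ((z ^ k * Cconj (z ^ k)) * (z * (z * z ^ k)))%C; [ring|].
  rewrite Hk. ring.
Qed.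

Theorem proposition3 (d H Tmax : nat) (A B P : nat -> nat -> R) :
  (1 <= d)%nat -> (1 <= H)%nat -> (2 <= Tmax)%nat ->
  loss d H Tmax A B P = 0 ->
  (forall T : nat, (2 <= T <= Tmax)%nat ->
     (forall t : nat, (1 <= t <= T - 1)%nat -> P (T - 1)%nat t = 0) /\
     (forall i : nat, (i < d)%nat -> P (T - 1)%nat T * Cmat H A B i i = 1) /\
     (forall i j : nat, (i < d)%nat -> (j < d)%nat -> i <> j ->
        Cmat H A B i j = 0)) /\
  (d <= H)%nat /\
  (forall lam : nat -> Cx, (forall i, (i < d)%nat -> Cmod (lam i) = 1) ->
   forall T : nat, (2 <= T <= Tmax)%nat ->
   forall j : nat, (j < d)%nat ->
     model d H A B P (e_seq lam) T j =
       Cmult (Cmult (Cconj (e_seq lam (T - 1)%nat j)) (e_seq lam T j))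
             (e_seq lam T j) /\
     model d H A B P (e_seq lam) T j = cpown (lam j) T).
Proof.
  intros Hd _ HTmax Hloss.
  pose proof (model_eq_of_loss_eq0 d H Tmax A B P Hloss) as Hmodel.
  assert (Hcoef : forall T, (2 <= T <= Tmax)%nat ->
     (forall t, (1 <= t <= T - 1)%nat -> P (T - 1)%nat t = 0) /\
     (forall i, (i < d)%nat -> P (T - 1)%nat T * Cmat H A B i i = 1) /\
     (forall i j, (i < d)%nat -> (j < d)%nat -> i <> j -> Cmat H A B i j = 0)).
  { intros T HT. assert (HT2 : (2 <= T)%nat) by lia. specialize (Hmodel T HT).
    split; [|split].
    - intros t Ht. replace t with (S (t - 1)) by lia.
      apply (early_position_coefficient d H A B P T HT2 Hmodel 0); lia.
    - exact (diagonal_coefficient d H A B P T HT2 Hmodel).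
    - intros i j Hi Hj Hij.
      exact (offdiagonal_coefficient d H A B P T HT2 Hmodel i j Hi Hj (not_eq_sym Hij)). }
  split; [exact Hcoef|split].
  - destruct (Hcoef 2%nat ltac:(lia)) as (_ & Hdiag & Hoff).
    apply (CmatRank.Cmat_diagonal_rank d H A B Hoff).
    intros i Hi E. specialize (Hdiag i Hi). rewrite E, Rmult_0_r in Hdiag. lra.
  - intros lam Hlam T HT j Hj. rewrite (Hmodel T HT lam Hlam j Hj). split; [|reflexivity].
    unfold e_seq. change cpown with Cpow.
    set (k := (T - 1 - 1)%nat).
    replace (T - 1)%nat with (S k) by lia. replace T with (S (S k)) at 1 by lia.
    symmetry. apply conj_shift_pow, Hlam, Hj.
Qed.
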